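(* Let $\mathcal{E}$ be a finite nonempty set (of domains), let $h\ge 1$, let $\theta^{*}\in\mathbb{R}^{h}$, and let $\epsilon>0$. For each $e\in\mathcal{E}$ let $\mathcal{R}_{e}:\mathbb{R}^{h}\to\mathbb{R}$ be a function (the risk on domain $e$) satisfying the quadratic bowl assumption: for all $\theta\in\mathbb{R}^h$, $$\mathcal{R}_{e}(\theta)=\mathcal{R}_{e}(\theta^{*})+\tfrac12(\theta-\theta^{*})^{\top}H_{e}(\theta-\theta^{*}),$$ where $H_{e}$ is a symmetric positive definite $h\times h$ matrix with eigenvalues $\lambda_{1}^{e}\ge\cdots\ge\lambda_{h}^{e}>0$. For $A\in\mathcal{E}$, let $N_{A,\theta^{*}}^{\epsilon}$ denote the largest path-connected subset of $\mathbb{R}^h$ containing $\theta^*$ on which $|\mathcal{R}_{A}(\theta)-\mathcal{R}_{A}(\theta^{*})|\le\epsilon$ (i.e. the path-connected component of $\theta^*$ in $\{\theta : |\mathcal{R}_{A}(\theta)-\mathcal{R}_{A}(\theta^{*})|\le\epsilon\}$). For $(A,B)\in\mathcal{E}^2$ define $$\mathcal{I}^{\epsilon}(A,B)=\max_{\theta\in N_{A,\theta^{*}}^{\epsilon}}\left|\mathcal{R}_{B}(\theta)-\mathcal{R}_{A}(\theta^{*})\right|,\qquad R(A,B)=\mathcal{R}_{B}(\theta^{*})-\mathcal{R}_{A}(\theta^{*}),$$ $$H^{\epsilon}(A,B)=\max_{\theta:\ \frac12(\theta-\theta^{*})^{\top}H_{A}(\theta-\theta^{*})\le\epsilon}\ \tfrac12(\theta-\theta^{*})^{\top}H_{B}(\theta-\theta^{*}).$$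 Suppose that for all $(A,B)\in\mathcal{E}^2$ with $R(A,B)<0$ we have $$\epsilon\le -R(A,B)\times\frac{\lambda_{h}^{A}}{\lambda_{1}^{B}}.$$ Then $$\max_{(A,B)\in\mathcal{E}^2}\mathcal{I}^{\epsilon}(A,B)=\max_{(A,B)\in\mathcal{E}^2}\bigl(R(A,B)+H^{\epsilon}(A,B)\bigr).$$
   Context: $\mathcal{I}^{\epsilon}(A,B)$ is called the inconsistency between domains $A$ and $B$ around $\theta^*$; $\lambda_1^{B}$ denotes the largest eigenvalue of $H_B$ and $\lambda_h^{A}$ the smallest eigenvalue of $H_A$. *)

From HB Require Import structures.
From mathcomp Require Import all_boot all_order all_algebra.
From mathcomp Require Import all_classical all_reals all_analysis.
Set Implicit Arguments. Unset Strict Implicit. Unset Printing Implicit Defensive.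
Import Order.TTheory GRing.Theory Num.Theory.
Import numFieldNormedType.Exports.
Local Open Scope classical_set_scope.
Local Open Scope ring_scope.

Definition qform (R : realType) (h : nat) (M : 'M[R]_h) (v : 'rV[R]_h) : R :=
  (v *m M *m v^T) 0 0.

Definition symmetric_mx (R : realType) (h : nat) (M : 'M[R]_h) : Prop := M^T = M.

Definition posdef_mx (R : realType) (h : nat) (M : 'M[R]_h) : Prop :=
  forall v : 'rV[R]_h, v != 0 -> 0 < qform M v.

Definition largest_eigenvalue (R : realType) (h : nat) (M : 'M[R]_h) (l : R) : Prop :=
  eigenvalue M l /\ forall a, eigenvalue M a -> a <= l.
Definition smallest_eigenvalue (R : realType) (h : nat) (M : 'M[R]_h) (l : R) : Prop :=
  eigenvalue M l /\ forall a, eigenvalue M a -> l <= a.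

Definition path_in (R : realType) (h : nat) (S : set 'rV[R]_h) (x y : 'rV[R]_h) : Prop :=
  exists g : R -> 'rV[R]_h,
    {within `[0, 1], continuous g} /\ g 0 = x /\ g 1 = y /\
    (forall t, t \in `[0, 1] -> S (g t)).

Definition path_component (R : realType) (h : nat) (S : set 'rV[R]_h) (x : 'rV[R]_h)
  : set 'rV[R]_h := [set y | path_in S x y].

Definition is_max (R : realType) (S : set R) (m : R) : Prop :=
  S m /\ forall x, S x -> x <= m.

Section Defs.
Variables (R : realType) (E : finType) (h : nat) (Risk : E -> 'rV[R]_h -> R)
  (H : E -> 'M[R]_h) (thetas : 'rV[R]_h) (eps : R).

Definition Nset (A : E) : set 'rV[R]_h :=
  path_component [set th | `|Risk A th - Risk A thetas| <= eps] thetas.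

Definition Iset (A B : E) : set R :=
  [set `|Risk B th - Risk A thetas| | th in Nset A].

Definition Ieps (A B : E) : R := sup (Iset A B).

Definition Rdiff (A B : E) : R := Risk B thetas - Risk A thetas.

Definition Hset (A B : E) : set R :=
  [set (1/2) * qform (H B) (th - thetas) |
     th in [set th | (1/2) * qform (H A) (th - thetas) <= eps]].

Definition Heps (A B : E) : R := sup (Hset A B).
End Defs.

From HB Require Import structures.
From mathcomp Require Import all_boot all_order all_algebra.
From mathcomp Require Import all_classical all_reals all_analysis.
From mathcomp Require Import ring lra.
Import Order.TTheory GRing.Theory Num.Theory.
Set Implicit Arguments. Unset Strict Implicit. Unset Printing Implicit Defensive.
Import numFieldNormedType.Exports.
Local Open Scope classical_set_scope.
Local Open Scope ring_scope.

(* Under the quadratic bowl assumption the sublevel set defining N^eps_A is the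
   ellipsoid {1/2 q_A(th - th* ) <= eps}; it is star-shaped around th*, so it is
   its own path component.  Hence I^eps(A,B) is the maximum of |R(A,B) + x| over
   the values x in [0, H^eps(A,B)] of 1/2 q_B on that ellipsoid: it is
   R(A,B) + H^eps(A,B) if R(A,B) >= 0, and -R(A,B) otherwise, because the
   Rayleigh bounds lam_h^A |v|^2 <= q_A(v) and q_B(v) <= lam_1^B |v|^2 together
   with the hypothesis on eps give H^eps(A,B) <= -R(A,B).  As R(B,A) = -R(A,B),
   each value -R(A,B) is dominated by R(B,A) + H^eps(B,A); conversely the largest
   R + H^eps is at least H^eps(A,A) >= 0 and is therefore itself a value of
   I^eps.  The Rayleigh bounds come from maximizing q on the compact unit
   sphere: a maximizer is an eigenvector, by a first-variation argument. *)

Section QuadraticForm.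
Variables (R : realType) (n : nat).
Implicit Types (M N : 'M[R]_n) (u v : 'rV[R]_n).

Definition sqnorm v : R := \sum_j v 0 j ^+ 2.

Lemma qform1 v : qform 1%:M v = sqnorm v.
Proof. by rewrite /qform mulmx1 mxE; apply: eq_bigr => j _; rewrite mxE expr2. Qed.

Lemma sqnorm_ge0 v : 0 <= sqnorm v.
Proof. by apply: sumr_ge0 => j _; exact: sqr_ge0. Qed.

Lemma sqr_coord_le_sqnorm v j : v 0 j ^+ 2 <= sqnorm v.
Proof.
by rewrite /sqnorm (bigD1 j) //= lerDl; apply: sumr_ge0 => i _; exact: sqr_ge0.
Qed.

Lemma sqnorm_gt0 v : v != 0 -> 0 < sqnorm v.
Proof.
move=> v_neq0; rewrite lt_def sqnorm_ge0 andbT; apply: contraNneq v_neq0 => v0.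
apply/eqP/rowP => j; rewrite mxE; apply/eqP.
by rewrite -sqrf_eq0 eq_le sqr_ge0 andbT -v0 sqr_coord_le_sqnorm.
Qed.

Lemma qformE M v : qform M v = \sum_i \sum_j v 0 i * M i j * v 0 j.
Proof.
rewrite /qform mxE exchange_big /=; apply: eq_bigr => j _.
by rewrite !mxE big_distrl.
Qed.

Lemma qformZ M a v : qform M (a *: v) = a ^+ 2 * qform M v.
Proof.
by rewrite /qform -scalemxAl linearZ /= -scalemxAr -scalemxAl !mxE mulrA expr2.
Qed.

Lemma qform0 M : qform M 0 = 0.
Proof. by rewrite -(scale0r (0 : 'rV_n)) qformZ expr0n mul0r. Qed.

Lemma qformNmx M v : qform (- M) v = - qform M v.
Proof. by rewrite /qform mulmxN mulNmx mxE. Qed.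

Lemma qformBscalar M a v : qform (M - a%:M) v = qform M v - a * sqnorm v.
Proof.
rewrite -qform1 /qform mulmxBr mulmxBl mxE; congr (_ + _).
by rewrite mxE mul_mx_scalar -scalemxAl mxE mulmx1.
Qed.

Lemma qformD M u v : M^T = M ->
  qform M (u + v) = qform M u + 2 * (u *m M *m v^T) 0 0 + qform M v.
Proof.
move=> M_sym; have sym_term : (v *m M *m u^T) 0 0 = (u *m M *m v^T) 0 0.
  have -> : (v *m M *m u^T) 0 0 = (v *m M *m u^T)^T 0 0 by rewrite [RHS]mxE.
  by rewrite !trmx_mul trmxK M_sym mulmxA.
have addE (X Y : 'M[R]_1) : (X + Y) 0 0 = X 0 0 + Y 0 0 by rewrite mxE.
rewrite /qform linearD /= !mulmxDl !mulmxDr !addE sym_term.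
by rewrite mulr2n mulrDl mul1r !addrA.
Qed.

Lemma continuous_qform M : continuous (qform M).
Proof.
have -> : qform M = fun v => \sum_i \sum_j v 0 i * M i j * v 0 j.
  by apply: funext => v; rewrite qformE.
apply: continuous_big => [|i _]; first exact: add_continuous.
apply: continuous_big => [|j _ v]; first exact: add_continuous.
apply: (@continuousM _ _ (fun v => v 0 i * M i j) (fun v => v 0 j));
  last exact: coord_continuous.
apply: (@continuousM _ _ (fun v : 'rV_n => v 0 i) (fun=> M i j)).
  exact: coord_continuous.
exact: cst_continuous.
Qed.

Lemma continuous_sqnorm : continuous sqnorm.
Proof.
have -> : sqnorm = qform 1%:M by apply: funext => v; rewrite qform1.
exact: continuous_qform.
Qed.

Lemma sqnorm_normalize v : v != 0 -> sqnorm ((Num.sqrt (sqnorm v))^-1 *: v) = 1.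
Proof.
move=> v_neq0; have v_gt0 := sqnorm_gt0 v_neq0.
by rewrite -qform1 qformZ qform1 exprVn sqr_sqrtr ?ltW // mulVf ?gt_eqF.
Qed.

Lemma sqnorm_bounded_compact (A : set 'rV[R]_n) (C : R) :
  (forall v, A v -> sqnorm v <= C) -> closed A -> compact A.
Proof.
move=> A_bnd A_closed; apply: bounded_closed_compact => //.
exists (1 + `|C|); split; first exact: num_real.
move=> r r_gt x Ax /=; apply: le_trans (ltW r_gt).
change (mx_norm x <= 1 + `|C|); rewrite mx_normrE; apply: bigmax_le => [|[i j] _ /=].
  by rewrite addr_ge0.
have xj_le : x i j ^+ 2 <= `|C|.
  rewrite (ord1 i); apply: le_trans (sqr_coord_le_sqnorm x j) _.
  exact: le_trans (A_bnd x Ax) (ler_norm C).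
have [xj_le1|xj_gt1] := lerP `|x i j| 1.
  by apply: le_trans xj_le1 _; rewrite lerDl.
have : `|x i j| <= `|x i j| ^+ 2 by rewrite expr2 ler_peMr // ltW.
by rewrite real_normK ?num_real //; lra.
Qed.

End QuadraticForm.

Lemma le0_of_quadratic_le0 (R : realFieldType) (c d : R) :
  (forall t, 2 * t * c + t ^+ 2 * d <= 0) -> c <= 0.
Proof.
move=> quad_le0; rewrite leNgt; apply/negP => c_gt0.
have d_le : - d <= `|d| by rewrite -normrN ler_norm.
have d_ge : 0 <= `|d| := normr_ge0 d.
have k_gt0 : 0 < `|d| + 1 by lra.
(* at t = c / (|d| + 1) the linear term 2 t c dominates the quadratic one *)
have := quad_le0 (c / (`|d| + 1)).
have -> : 2 * (c / (`|d| + 1)) * c + (c / (`|d| + 1)) ^+ 2 * d =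
          (c / (`|d| + 1)) ^+ 2 * (2 * (`|d| + 1) + d).
  by field; rewrite gt_eqF.
have : 0 < (c / (`|d| + 1)) ^+ 2 * (2 * (`|d| + 1) + d).
  by rewrite mulr_gt0 ?exprn_gt0 ?divr_gt0 //; lra.
lra.
Qed.

Section Rayleigh.
Variables (R : realType) (n : nat).
Implicit Types (M N : 'M[R]_n) (v : 'rV[R]_n).

Lemma qform_le0_root_mulmx N v : N^T = N -> (forall u, qform N u <= 0) ->
  qform N v = 0 -> v *m N = 0.
Proof.
move=> N_sym N_le0 Nv0; set w := v *m N.
have vNw : (v *m N *m w^T) 0 0 = sqnorm w by rewrite -qform1 /qform mulmx1.
(* t |-> qform N (v + t w) is nonpositive, vanishes at 0 and has slope 2 |w|^2 there *)
have w_le0 : sqnorm w <= 0.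
  apply: (@le0_of_quadratic_le0 _ _ (qform N w)) => t.
  have := N_le0 (v + t *: w).
  rewrite qformD // Nv0 qformZ linearZ /= -scalemxAr mxE vNw add0r.
  by rewrite mulrA [2 * t]mulrC.
apply/eqP; apply: contraTT w_le0 => w_neq0; rewrite -ltNge; exact: sqnorm_gt0.
Qed.

Hypothesis n_gt0 : (0 < n)%N.

Lemma exists_eigenvalue_qform_ub M : M^T = M ->
  exists2 m, eigenvalue M m & forall v, qform M v <= m * sqnorm v.
Proof.
move=> M_sym; pose S := [set v : 'rV[R]_n | sqnorm v = 1].
have S_neq0 : S !=set0.
  have one_neq0 : const_mx 1 != 0 :> 'rV[R]_n.
    by apply/eqP => /rowP/(_ (Ordinal n_gt0)); rewrite !mxE => /eqP; rewrite oner_eq0.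
  by eexists; exact: sqnorm_normalize one_neq0.
have S_compact : compact S.
  apply: (@sqnorm_bounded_compact _ _ _ 1) => [v ->//|].
  apply: (@preimage_closed _ _ (@sqnorm R n) [set 1]); last exact: closed_eq.
  by move=> v _; exact: continuous_sqnorm.
have [v0 v0S v0_max] :=
  EVT_max_rV S_neq0 S_compact (continuous_subspaceT (@continuous_qform _ _ M)).
have {}v0S : sqnorm v0 = 1 := set_mem v0S.
have qform_ub v : qform M v <= qform M v0 * sqnorm v.
  have [->|v_neq0] := eqVneq v 0; first by rewrite -qform1 !qform0 mulr0.
  have := v0_max _ (mem_set (sqnorm_normalize v_neq0)).
  rewrite qformZ exprVn sqr_sqrtr ?sqnorm_ge0 // ler_pdivrMl ?sqnorm_gt0 //.
  by rewrite mulrC.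
exists (qform M v0) => //.
have v0_ker : v0 *m (M - (qform M v0)%:M) = 0.
  apply: qform_le0_root_mulmx.
  - by rewrite linearB /= tr_scalar_mx M_sym.
  - by move=> u; rewrite qformBscalar subr_le0.
  - by rewrite qformBscalar v0S mulr1 subrr.
apply/eigenvalueP; exists v0.
  by apply/eqP; rewrite -subr_eq0 -mul_mx_scalar -mulmxBr v0_ker.
by apply: contra_eq_neq v0S => ->; rewrite -qform1 qform0 eq_sym oner_neq0.
Qed.

Lemma qform_le_largest_eigenvalue M l v : M^T = M ->
  largest_eigenvalue M l -> qform M v <= l * sqnorm v.
Proof.
move=> M_sym [_ l_max].
have [m /l_max m_le qform_ub] := exists_eigenvalue_qform_ub M_sym.
by apply: le_trans (qform_ub v) _; rewrite ler_wpM2r ?sqnorm_ge0.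
Qed.

Lemma qform_ge_smallest_eigenvalue M l v : M^T = M ->
  smallest_eigenvalue M l -> l * sqnorm v <= qform M v.
Proof.
move=> M_sym [_ l_min].
have NM_sym : (- M)^T = - M by rewrite linearN /= M_sym.
have [m m_eig qform_ub] := exists_eigenvalue_qform_ub NM_sym.
have Nm_eig : eigenvalue M (- m).
  move/eigenvalueP: m_eig => [w wM w_neq0]; apply/eigenvalueP; exists w => //.
  by rewrite scaleNr -wM mulmxN opprK.
have := qform_ub v; rewrite qformNmx.
have := ler_wpM2r (sqnorm_ge0 v) (l_min _ Nm_eig); rewrite mulNr; lra.
Qed.

End Rayleigh.

Lemma eigenvalue_posdef_gt0 (R : realType) n (M : 'M[R]_n) a :
  posdef_mx M -> eigenvalue M a -> 0 < a.
Proof.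
move=> M_pd /eigenvalueP [w wM w_neq0].
have := M_pd w w_neq0; rewrite /qform wM -scalemxAl mxE.
have := sqnorm_gt0 w_neq0; rewrite -qform1 /qform mulmx1.
by move=> ww_gt0; rewrite pmulr_lgt0.
Qed.

Lemma compact_qform_sublevel (R : realType) n (M : 'M[R]_n) l c :
  (0 < n)%N -> M^T = M -> posdef_mx M -> smallest_eigenvalue M l ->
  compact [set v | qform M v <= c].
Proof.
move=> n_gt0 M_sym M_pd l_min; have l_gt0 := eigenvalue_posdef_gt0 M_pd l_min.1.
apply: (@sqnorm_bounded_compact _ _ _ (c / l)) => [v /= v_le|].
  rewrite ler_pdivlMr // mulrC.
  exact: le_trans (qform_ge_smallest_eigenvalue n_gt0 v M_sym l_min) v_le.
apply: (@preimage_closed _ _ (qform M) [set x | x <= c]); last exact: closed_le.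
by move=> v _; exact: continuous_qform.
Qed.

Lemma path_component_star (R : realType) n (S : set 'rV[R]_n) x :
  (forall y t, S y -> t \in `[0, 1] -> S (x + t *: (y - x))) ->
  path_component S x = S.
Proof.
move=> S_star; apply/seteqP; split=> y.
  by move=> [g [_ [_ [<- gS]]]]; apply: gS; rewrite in_itv /= ler01 lexx.
move=> Sy; exists (fun t => x + t *: (y - x)); split.
  apply: continuous_subspaceT => t; apply: cvgD; first exact: cvg_cst.
  by apply: continuousZr_tmp; exact: cvg_id.
rewrite scale0r addr0 scale1r addrC subrK.
by split=> //; split=> // t; exact: S_star.
Qed.

Lemma is_max_sup (R : realType) (S : set R) m : is_max S m -> sup S = m.
Proof.
move=> [Sm m_ub]; apply/eqP; rewrite eq_le; apply/andP; split.
  by apply: ge_sup; [exists m | move=> x /m_ub].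
by apply: sup_upper_bound => //; split; [exists m | exists m => x /m_ub].
Qed.

Lemma is_max_abs_shift (R : realType) (S : set R) m r :
  is_max S m -> S 0 -> (forall x, S x -> 0 <= x) -> (r < 0 -> m <= - r) ->
  is_max [set `|r + x| | x in S] (if 0 <= r then r + m else - r).
Proof.
move=> [Sm m_ub] S0 S_ge0 m_le; have m_ge0 := S_ge0 _ Sm.
case: ifPn => [r_ge0|]; last rewrite -ltNge => r_lt0.
  split; first by exists m => //; rewrite ger0_norm // addr_ge0.
  move=> _ [x Sx <-]; rewrite ger0_norm; first by rewrite lerD2l m_ub.
  exact: addr_ge0 r_ge0 (S_ge0 _ Sx).
split; first by exists 0 => //; rewrite addr0 ltr0_norm.
move=> _ [x Sx <-]; have := m_ub _ Sx; have := S_ge0 _ Sx; have := m_le r_lt0.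
by rewrite ler_norml => *; apply/andP; split; lra.
Qed.

Lemma exists_common_max_pairs (R : realType) (E : finType)
  (r Hm I : E -> E -> R) :
  (0 < #|E|)%N -> (forall A B, r B A = - r A B) -> (forall A B, 0 <= Hm A B) ->
  (forall A B, r A B < 0 -> Hm A B <= - r A B) ->
  (forall A B, I A B = if 0 <= r A B then r A B + Hm A B else - r A B) ->
  exists m, is_max [set I p.1 p.2 | p in [set: E * E]] m /\
            is_max [set r p.1 p.2 + Hm p.1 p.2 | p in [set: E * E]] m.
Proof.
move=> /card_gt0P [e0 _] r_anti Hm_ge0 Hm_le IE.
have r_diag A : r A A = 0 by have := r_anti A A; lra.
pose G (p : E * E) := r p.1 p.2 + Hm p.1 p.2.
have [[A B] G_max] : exists p, forall q, G q <= G p.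
  case: (@arg_maxP _ _ _ (e0, e0) xpredT G isT) => p _ p_max.
  by exists p => q; exact: p_max.
exists (G (A, B)); split; last by split=> [|_ [q _ <-]]; [exists (A, B) | exact: G_max].
split.
  have [r_ge0|r_lt0] := lerP 0 (r A B); first by exists (A, B) => //; rewrite IE r_ge0.
  (* G (A, B) <= 0 <= G (A, A) <= G (A, B) *)
  exists (A, A) => //=; rewrite IE r_diag lexx add0r.
  have := G_max (A, A); have := Hm_le _ _ r_lt0; have := Hm_ge0 A A.
  by rewrite /G /= r_diag; lra.
move=> _ [[A' B'] _ <-] /=; rewrite IE; case: ifP => _; first exact: (G_max (A', B')).
apply: le_trans (G_max (B', A')); rewrite /G /= r_anti; have := Hm_ge0 B' A'; lra.
Qed.

Section QuadraticBowl.
Variables (R : realType) (E : finType) (h : nat) (Risk : E -> 'rV[R]_h -> R)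
  (H : E -> 'M[R]_h) (lam1 lamh : E -> R) (thetas : 'rV[R]_h) (eps : R).
Hypotheses (E_gt0 : (0 < #|E|)%N) (h_gt0 : (0 < h)%N) (eps_gt0 : 0 < eps).
Hypothesis H_sym : forall e, symmetric_mx (H e).
Hypothesis H_posdef : forall e, posdef_mx (H e).
Hypothesis lam1_largest : forall e, largest_eigenvalue (H e) (lam1 e).
Hypothesis lamh_smallest : forall e, smallest_eigenvalue (H e) (lamh e).
Hypothesis bowl :
  forall e th, Risk e th = Risk e thetas + (1/2) * qform (H e) (th - thetas).
Hypothesis eps_small : forall A B, Rdiff Risk thetas A B < 0 ->
  eps <= - Rdiff Risk thetas A B * (lamh A / lam1 B).

Lemma qform_H_ge0 e v : 0 <= qform (H e) v.
Proof. by have [->|/H_posdef/ltW//] := eqVneq v 0; rewrite qform0. Qed.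

Lemma Nset_ellipsoid A :
  Nset Risk thetas eps A = [set th | (1/2) * qform (H A) (th - thetas) <= eps].
Proof.
rewrite /Nset; have -> : [set th | `|Risk A th - Risk A thetas| <= eps] =
          [set th | (1/2) * qform (H A) (th - thetas) <= eps].
  apply/seteqP; split=> th /=;
    by rewrite bowl (addrC (Risk A thetas)) addrK ger0_norm ?mulr_ge0 ?qform_H_ge0.
apply: path_component_star => th t th_ell; rewrite in_itv /= => /andP[t_ge0 t_le1].
rewrite /= [thetas + _]addrC addrK qformZ mulrCA.
by apply: le_trans th_ell; rewrite ler_piMl ?mulr_ge0 ?qform_H_ge0 ?expr_le1.
Qed.

Lemma Hset_is_max A B : is_max (Hset H thetas eps A B) (Heps H thetas eps A B).
Proof.
pose K := [set v | qform (H A) v <= 2 * eps].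
have K0 : K 0 by rewrite /K /= qform0; have := eps_gt0; lra.
have [v0 v0K v0_max] := EVT_max_rV (ex_intro _ 0 K0)
  (compact_qform_sublevel (c := 2 * eps) h_gt0 (H_sym A) (H_posdef A)
     (lamh_smallest A))
  (continuous_subspaceT (@continuous_qform _ _ (H B))).
have {}v0K : qform (H A) v0 <= 2 * eps := set_mem v0K.
suff H_max : is_max (Hset H thetas eps A B) ((1/2) * qform (H B) v0).
  by rewrite /Heps (is_max_sup H_max).
split; first by exists (v0 + thetas); rewrite /= addrK //; lra.
move=> _ [th /= th_ell <-]; rewrite ler_wpM2l //.
by apply/v0_max/mem_set; rewrite /K /=; lra.
Qed.

Lemma Hset0 A B : Hset H thetas eps A B 0.
Proof. by exists thetas; rewrite /= subrr qform0 mulr0 //; exact: ltW. Qed.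

Lemma Hset_ge0 A B x : Hset H thetas eps A B x -> 0 <= x.
Proof. by move=> [th _ <-]; rewrite mulr_ge0 ?qform_H_ge0. Qed.

Lemma Hset_le_Rdiff A B x : Rdiff Risk thetas A B < 0 ->
  Hset H thetas eps A B x -> x <= - Rdiff Risk thetas A B.
Proof.
move=> Rd_lt0 [th /= th_ell <-]; set v := th - thetas.
set Rd := Rdiff _ _ _ _ in Rd_lt0 *.
have lamh_gt0 := eigenvalue_posdef_gt0 (H_posdef A) (lamh_smallest A).1.
have lam1_gt0 := eigenvalue_posdef_gt0 (H_posdef B) (lam1_largest B).1.
have eps_le : eps / lamh A <= - Rd / lam1 B.
  by rewrite ler_pdivrMr // mulrAC -mulrA eps_small.
have v_le : sqnorm v <= 2 * (- Rd / lam1 B).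
  have q_le : qform (H A) v / lamh A <= 2 * eps / lamh A.
    by rewrite ler_pM2r ?invr_gt0 //; lra.
  have := qform_ge_smallest_eigenvalue h_gt0 v (H_sym A) (lamh_smallest A).
  rewrite -ler_pdivlMl //; lra.
have := qform_le_largest_eigenvalue h_gt0 v (H_sym B) (lam1_largest B).
have := ler_wpM2l (ltW lam1_gt0) v_le.
have -> : lam1 B * (2 * (- Rd / lam1 B)) = 2 * - Rd by field; rewrite gt_eqF.
lra.
Qed.

Lemma Heps_ge0 A B : 0 <= Heps H thetas eps A B.
Proof. exact: Hset_ge0 (Hset_is_max A B).1. Qed.

Lemma Heps_le_Rdiff A B : Rdiff Risk thetas A B < 0 ->
  Heps H thetas eps A B <= - Rdiff Risk thetas A B.
Proof. by move=> Rd_lt0; apply: Hset_le_Rdiff Rd_lt0 (Hset_is_max A B).1. Qed.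

Lemma Iset_shift A B : Iset Risk thetas eps A B =
  [set `|Rdiff Risk thetas A B + x| | x in Hset H thetas eps A B].
Proof.
rewrite /Iset Nset_ellipsoid /Hset image_comp; apply: eq_imagel => th _ /=.
by rewrite /Rdiff [Risk B th]bowl addrAC.
Qed.

Lemma Iset_is_max A B : is_max (Iset Risk thetas eps A B)
  (if 0 <= Rdiff Risk thetas A B
   then Rdiff Risk thetas A B + Heps H thetas eps A B
   else - Rdiff Risk thetas A B).
Proof.
rewrite Iset_shift; apply: is_max_abs_shift (Hset_is_max A B) (Hset0 A B) _ _.
  exact: Hset_ge0.
exact: Heps_le_Rdiff.
Qed.

Lemma IepsE A B : Ieps Risk thetas eps A B =
  if 0 <= Rdiff Risk thetas A B
  then Rdiff Risk thetas A B + Heps H thetas eps A B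
  else - Rdiff Risk thetas A B.
Proof. exact: is_max_sup (Iset_is_max A B). Qed.

Lemma Ieps_is_max A B :
  is_max (Iset Risk thetas eps A B) (Ieps Risk thetas eps A B).
Proof. by rewrite IepsE; exact: Iset_is_max. Qed.

Lemma exists_common_max_Ieps_Rdiff_Heps : exists m,
  is_max [set Ieps Risk thetas eps p.1 p.2 | p in [set: E * E]] m /\
  is_max [set Rdiff Risk thetas p.1 p.2 + Heps H thetas eps p.1 p.2
           | p in [set: E * E]] m.
Proof.
apply: exists_common_max_pairs E_gt0 _ Heps_ge0 Heps_le_Rdiff IepsE => A B.
by rewrite /Rdiff opprB.
Qed.

End QuadraticBowl.

Theorem mainTheorem1 (R : realType) (E : finType) (h : nat)
  (Risk : E -> 'rV[R]_h -> R) (H : E -> 'M[R]_h) (lam1 lamh : E -> R)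
  (thetas : 'rV[R]_h) (eps : R) :
  (0 < #|E|)%N ->
  (1 <= h)%N ->
  0 < eps ->
  (forall e, symmetric_mx (H e) /\ posdef_mx (H e)) ->
  (forall e, largest_eigenvalue (H e) (lam1 e)) ->
  (forall e, smallest_eigenvalue (H e) (lamh e)) ->
  (forall e th, Risk e th = Risk e thetas + (1/2) * qform (H e) (th - thetas)) ->
  (forall A B, Rdiff Risk thetas A B < 0 ->
     eps <= - Rdiff Risk thetas A B * (lamh A / lam1 B)) ->
  (forall A B, is_max (Iset Risk thetas eps A B) (Ieps Risk thetas eps A B)) /\
  (forall A B, is_max (Hset H thetas eps A B) (Heps H thetas eps A B)) /\
  exists m : R,
    is_max [set Ieps Risk thetas eps p.1 p.2 | p in [set: E * E]] m /\
    is_max [set Rdiff Risk thetas p.1 p.2 + Heps H thetas eps p.1 p.2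
             | p in [set: E * E]] m.
Proof.
move=> E_gt0 h_gt0 eps_gt0 H_sym_pd lam1_largest lamh_smallest bowl eps_small.
have H_sym e := (H_sym_pd e).1.
have H_posdef e := (H_sym_pd e).2.
split; [|split].
- exact: Ieps_is_max.
- exact: Hset_is_max.
- exact: exists_common_max_Ieps_Rdiff_Heps.
Qed.
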